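(* Let $0<r_i<r_o$, $0<h<H$, $n>0$, $p>0$, let $a_r$, $\boldsymbol\sigma^0$ and $c=3^{\frac{n-1}{2}}a_r|a_r|^{n-1}n^{-n}$ be as in the context, and let $\boldsymbol C(r)$ be the compliance matrix defined in the context. Let $\boldsymbol\sigma^-=(\sigma^-_r,\sigma^-_\theta,\sigma^-_z,\sigma^-_{rz})$ be a continuously differentiable axisymmetric stress field on $\Omega^-=[r_i,r_o]\times[0,h]$ and $\boldsymbol\sigma^+$ one on $\Omega^+=[r_i,r_o]\times[h,H]$, each satisfying the axisymmetric equilibrium equations on its domain, with $\sigma^\pm_r=\sigma^\pm_{rz}=0$ at $r=r_i$ and $r=r_o$, $\sigma^-_{rz}=0$ at $z=0$, and $\sigma^+_{rz}=0$ at $z=H$. Suppose there are continuously differentiable displacement fields $u^\pm=(u^\pm_r,u^\pm_z)$ on $\Omega^\pm$ such that the strains $$\varepsilon_r=\frac{\partial u_r}{\partial r},\ \varepsilon_\theta=\frac{u_r}{r},\ \varepsilon_z=\frac{\partial u_z}{\partial z},\ \varepsilon_{rz}=\frac12\Big(\frac{\partial u_r}{\partial z}+\frac{\partial u_z}{\partial r}\Big)$$ computed from $u^\pm$ satisfy $(\varepsilon_r,\varepsilon_\theta,\varepsilon_z,2\varepsilon_{rz})^T=\boldsymbol C(r)\,(\sigma^\pm_r,\sigma^\pm_\theta,\sigma^\pm_z,\sigma^\pm_{rz})^T$ on $\Omega^\pm$, with $u^-_z=0$ at $z=0$ and $u^+_z=0$ at $z=H$, and that at the interface $z=h$, for all $r\in[r_i,r_o]$,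 $$\sigma^+_{rz}=\sigma^-_{rz},\quad \sigma^+_z=\sigma^-_z,\quad u^+_z=u^-_z,\quad u^+_r-u^-_r=\frac{c}{r}.$$ Define $\boldsymbol\sigma^1=\boldsymbol\sigma^-$ on $\{z<h\}$ and $\boldsymbol\sigma^1=\boldsymbol\sigma^+$ on $\{z\ge h\}$. Then for every admissible virtual stress field $\delta\boldsymbol\sigma$, $$\int_{r_i}^{r_o}\!\!\int_0^H(\vec{\boldsymbol\sigma}^1)^T\boldsymbol C(r)\,\vec{\delta\boldsymbol\sigma}\;r\,dz\,dr=\int_{r_i}^{r_o}\!\!\int_0^h\dot{\boldsymbol\varepsilon}(\boldsymbol\sigma^0):\delta\boldsymbol\sigma\;r\,dz\,dr,$$ where $\vec{\boldsymbol\sigma}=(\sigma_r,\sigma_\theta,\sigma_z,\sigma_{rz})^T$; i.e. $\boldsymbol\sigma^1$ solves the first-order perturbation equation of the steady-state creep problem for the two-material pipe.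
   Context: Setting: steady-state creep of a pressurized pipe occupying $r_i\le r\le r_o$, $0\le z\le H$, with Norton's law $\dot{\boldsymbol\varepsilon}=A\,\boldsymbol s\,(\sigma_{vM})^{n-1}$, $\boldsymbol s=\boldsymbol\sigma-\frac13\mathrm{tr}(\boldsymbol\sigma)\boldsymbol I$, $\sigma_{vM}=\sqrt{\frac32\boldsymbol s:\boldsymbol s}$, where $A=1$ for $z\ge h$ and $A=1-s$ for $z<h$; the first-order perturbation $\boldsymbol\sigma^1=\frac{d\boldsymbol\sigma(s)}{ds}|_{s=0}$ is characterized by the linear variational equation in the conclusion. Write $\dot{\boldsymbol\varepsilon}(\boldsymbol\sigma)=\boldsymbol s(\sigma_{vM})^{n-1}$ (the $A=1$ law). The unperturbed (homogeneous pipe, $s=0$) solution is $\sigma^0_r=a+a_r r^{-2/n}$, $\sigma^0_\theta=a+a_\theta r^{-2/n}$, $\sigma^0_z=a+a_z r^{-2/n}$, $\sigma^0_{rz}=0$ with $a=p\,r_i^{2/n}/(r_o^{2/n}-r_i^{2/n})$, $a_r=-p\,r_i^{2/n}r_o^{2/n}/(r_o^{2/n}-r_i^{2/n})$, $a_\theta=\frac{n-2}{n}a_r$, $a_z=\frac{n-1}{n}a_r$. Axisymmetric stress fields have components $\sigma_r,\sigma_\theta,\sigma_z,\sigma_{rz}$ depending on $(r,z)$; the axisymmetric equilibrium equations are $\partial_r\sigma_r+\frac1r(\sigma_r-\sigma_\theta)+\partial_z\sigma_{rz}=0$ and $\partial_r\sigma_{rz}+\frac1r\sigma_{rz}+\partial_z\sigma_z=0$.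 An admissible virtual stress field is a continuously differentiable axisymmetric field on $[r_i,r_o]\times[0,H]$ satisfying these equilibrium equations and $\sigma_r=\sigma_{rz}=0$ at $r=r_i,r_o$, $\sigma_{rz}=0$ at $z=0,H$. The compliance matrix $\boldsymbol C(r)$ is the $4\times4$ Jacobian $\partial\vec{\dot{\boldsymbol\varepsilon}}/\partial\vec{\boldsymbol\sigma}$ evaluated at $\boldsymbol\sigma^0(r)$, where $\vec{\dot{\boldsymbol\varepsilon}}=(\dot\varepsilon_r,\dot\varepsilon_\theta,\dot\varepsilon_z,2\dot\varepsilon_{rz})^T$ is regarded as a function of $\vec{\boldsymbol\sigma}=(\sigma_r,\sigma_\theta,\sigma_z,\sigma_{rz})^T$ via $\dot{\boldsymbol\varepsilon}(\boldsymbol\sigma)=\boldsymbol s(\sigma_{vM})^{n-1}$. Also $\boldsymbol\varepsilon:\boldsymbol\sigma=\varepsilon_r\sigma_r+\varepsilon_\theta\sigma_\theta+\varepsilon_z\sigma_z+2\varepsilon_{rz}\sigma_{rz}$. *)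

From Stdlib Require Import Reals.
From Coquelicot Require Import Coquelicot.
Open Scope R_scope.

(* A scalar field of (r,z), a total function R -> R -> R (only its values on
   the relevant rectangle matter). *)
Definition field2 := R -> R -> R.

Definition dr (f : field2) (r z : R) : R := Derive (fun x => f x z) r.
Definition dz (f : field2) (r z : R) : R := Derive (fun y => f r y) z.

Definition C1_on (a b c d : R) (f : field2) : Prop :=
  forall r z, a <= r <= b -> c <= z <= d ->
    continuity_2d_pt f r z /\
    ex_derive (fun x => f x z) r /\ ex_derive (fun y => f r y) z /\
    continuity_2d_pt (dr f) r z /\ continuity_2d_pt (dz f) r z.

(* Axisymmetric stress field: components indexed by
   0 = sigma_r, 1 = sigma_theta, 2 = sigma_z, 3 = sigma_rz. *)
Definition stress := nat -> field2.
(* Displacement field: 0 = u_r, 1 = u_z. *)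
Definition displ := nat -> field2.

Definition stress_C1_on (a b c d : R) (s : stress) : Prop :=
  forall k, (k < 4)%nat -> C1_on a b c d (s k).

Definition displ_C1_on (a b c d : R) (u : displ) : Prop :=
  C1_on a b c d (u 0%nat) /\ C1_on a b c d (u 1%nat).

Definition equilibrium_on (a b c d : R) (s : stress) : Prop :=
  forall r z, a <= r <= b -> c <= z <= d ->
    dr (s 0%nat) r z + / r * (s 0%nat r z - s 1%nat r z) + dz (s 3%nat) r z = 0 /\
    dr (s 3%nat) r z + / r * s 3%nat r z + dz (s 2%nat) r z = 0.

Definition admissible (ri ro H : R) (ds : stress) : Prop :=
  stress_C1_on ri ro 0 H ds /\ equilibrium_on ri ro 0 H ds /\
  (forall z, 0 <= z <= H ->
     ds 0%nat ri z = 0 /\ ds 3%nat ri z = 0 /\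
     ds 0%nat ro z = 0 /\ ds 3%nat ro z = 0) /\
  (forall r, ri <= r <= ro -> ds 3%nat r 0 = 0 /\ ds 3%nat r H = 0).

(* Stress vectors (sigma_r, sigma_theta, sigma_z, sigma_rz) as functions nat -> R. *)
Definition vec4 := nat -> R.

Definition sum4 (f : nat -> R) : R := f 0%nat + f 1%nat + f 2%nat + f 3%nat.

(* Norton law with A = 1:  edot(sigma) = s * sigma_vM^(n-1), returned as the
   engineering vector (edot_r, edot_theta, edot_z, 2 edot_rz). *)
Definition dev_mean (v : vec4) : R := (v 0%nat + v 1%nat + v 2%nat) / 3.
Definition vonMises (v : vec4) : R :=
  sqrt (3 / 2 * ((v 0%nat - dev_mean v) ^ 2 + (v 1%nat - dev_mean v) ^ 2
                 + (v 2%nat - dev_mean v) ^ 2 + 2 * (v 3%nat) ^ 2)).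
Definition edot (n : R) (v : vec4) : vec4 := fun i =>
  match i with
  | 0%nat => (v 0%nat - dev_mean v) * Rpower (vonMises v) (n - 1)
  | 1%nat => (v 1%nat - dev_mean v) * Rpower (vonMises v) (n - 1)
  | 2%nat => (v 2%nat - dev_mean v) * Rpower (vonMises v) (n - 1)
  | 3%nat => 2 * v 3%nat * Rpower (vonMises v) (n - 1)
  | _ => 0
  end.

Definition a0 (ri ro n p : R) : R :=
  p * Rpower ri (2 / n) / (Rpower ro (2 / n) - Rpower ri (2 / n)).
Definition a_r (ri ro n p : R) : R :=
  - p * Rpower ri (2 / n) * Rpower ro (2 / n) / (Rpower ro (2 / n) - Rpower ri (2 / n)).
Definition a_theta (ri ro n p : R) : R := (n - 2) / n * a_r ri ro n p.
Definition a_z (ri ro n p : R) : R := (n - 1) / n * a_r ri ro n p.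

Definition sigma0 (ri ro n p : R) (r : R) : vec4 := fun i =>
  match i with
  | 0%nat => a0 ri ro n p + a_r ri ro n p * Rpower r (- 2 / n)
  | 1%nat => a0 ri ro n p + a_theta ri ro n p * Rpower r (- 2 / n)
  | 2%nat => a0 ri ro n p + a_z ri ro n p * Rpower r (- 2 / n)
  | _ => 0
  end.

Definition c_const (ri ro n p : R) : R :=
  Rpower 3 ((n - 1) / 2) * a_r ri ro n p * Rpower (Rabs (a_r ri ro n p)) (n - 1)
  * Rpower n (- n).

Definition upd (v : vec4) (j : nat) (t : R) : vec4 :=
  fun k => if Nat.eqb k j then t else v k.

Definition compliance (ri ro n p : R) (r : R) (i j : nat) : R :=
  Derive (fun t => edot n (upd (sigma0 ri ro n p r) j t) i) (sigma0 ri ro n p r j).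

Definition Cmul (ri ro n p r : R) (v : vec4) : vec4 :=
  fun i => sum4 (fun j => compliance ri ro n p r i j * v j).

Definition eval_stress (s : stress) (r z : R) : vec4 := fun k => s k r z.

Definition strain_of (u : displ) (r z : R) : vec4 := fun i =>
  match i with
  | 0%nat => dr (u 0%nat) r z
  | 1%nat => u 0%nat r z / r
  | 2%nat => dz (u 1%nat) r z
  | 3%nat => dz (u 0%nat) r z + dr (u 1%nat) r z
  | _ => 0
  end.

Definition glue (h : R) (sm sp : stress) : stress :=
  fun k r z => if Rlt_dec z h then sm k r z else sp k r z.

(* The compliance C(r) is the Hessian of the creep potential at
   sigma^0(r), hence symmetric, so on each of the two blocks
   sigma^(+/-) . C dsigma = eps(u^(+/-)) : dsigma.  Integrating by parts against the
   self-equilibrated, laterally traction-free dsigma reduces the integral of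
   eps(u) : dsigma r over a block to the work of the tractions (dsigma_rz, dsigma_z)
   on its faces z = const.  These vanish at z = 0 and z = H, and at z = h the jump
   c / r of u_r leaves -c times the integral of dsigma_rz(r, h).  On the other side
   edot(sigma^0) = (c / r^2, -c / r^2, 0, 0), and the radial equilibrium equation of
   dsigma turns (dsigma_r - dsigma_theta) / r into a divergence whose integral over
   [ri, ro] x [0, h] is the same quantity.  The divergence theorem on a rectangle
   comes from differentiating the inner integral under the integral sign. *)

From Stdlib Require Import Reals Lra Lia.
From Coquelicot Require Import Coquelicot.
Open Scope R_scope.

(** * Integrals over rectangles *)

Lemma continuity_2d_pt_snd (f : R -> R -> R) x y :
  continuity_2d_pt f x y -> continuous (fun t => f x t) y.
Proof.
intros Hf. apply filterlim_locally. intros eps.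
destruct (Hf eps) as [del Hdel]. exists del. intros t Ht. apply Hdel; [|exact Ht].
rewrite Rminus_eq_0, Rabs_R0. apply cond_pos.
Qed.

Lemma continuity_2d_pt_fst (f : R -> R -> R) x y :
  continuity_2d_pt f x y -> continuous (fun t => f t y) x.
Proof.
intros Hf. apply filterlim_locally. intros eps.
destruct (Hf eps) as [del Hdel]. exists del. intros t Ht. apply Hdel; [exact Ht|].
rewrite Rminus_eq_0, Rabs_R0. apply cond_pos.
Qed.

Lemma ex_RInt_continuous_on (f : R -> R) a b :
  a <= b -> (forall x, a <= x <= b -> continuous f x) -> ex_RInt f a b.
Proof.
intros Hab Hf. apply (ex_RInt_continuous (V := R_CompleteNormedModule)).
rewrite Rmin_left, Rmax_right by lra. exact Hf.
Qed.

Lemma ex_RInt_slice (g : R -> R -> R) c d x :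
  c <= d -> (forall y, c <= y <= d -> continuity_2d_pt g x y) ->
  ex_RInt (fun t => g x t) c d.
Proof.
intros Hcd Hg. apply ex_RInt_continuous_on; [exact Hcd|].
intros y Hy. apply continuity_2d_pt_snd, Hg, Hy.
Qed.

Definition continuous_within (a b : R) (f : R -> R) (x : R) : Prop :=
  forall eps : posreal, exists del : posreal,
    forall y, a <= y <= b -> Rabs (y - x) < del -> Rabs (f y - f x) < eps.

Definition clamp (a b x : R) : R := Rmax a (Rmin b x).

Lemma clamp_in a b x : a <= b -> a <= clamp a b x <= b.
Proof. unfold clamp, Rmax, Rmin. intros. repeat destruct Rle_dec; lra. Qed.

Lemma clamp_id a b x : a <= x <= b -> clamp a b x = x.
Proof. unfold clamp, Rmax, Rmin. intros. repeat destruct Rle_dec; lra. Qed.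

Lemma clamp_dist a b x y :
  a <= b -> Rabs (clamp a b x - clamp a b y) <= Rabs (x - y).
Proof.
unfold clamp, Rmax, Rmin, Rabs. intros.
repeat destruct Rle_dec; repeat destruct Rcase_abs; lra.
Qed.

Lemma continuous_clamp (f : R -> R) a b :
  a <= b -> (forall x, a <= x <= b -> continuous_within a b f x) ->
  forall y, continuous (fun x => f (clamp a b x)) y.
Proof.
intros Hab Hf y. apply filterlim_locally. intros eps.
destruct (Hf (clamp a b y) (clamp_in _ _ _ Hab) eps) as [del Hdel].
exists del. intros t Ht. apply Hdel; [now apply clamp_in|].
eapply Rle_lt_trans; [apply clamp_dist, Hab | exact Ht].
Qed.

Lemma is_RInt_derive_interior (f df : R -> R) a b : a < b ->
  (forall x, a < x < b -> is_derive f x (df x)) ->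
  (forall x, a <= x <= b -> continuous_within a b f x) ->
  (forall x, a <= x <= b -> continuous_within a b df x) ->
  is_RInt df a b (f b - f a).
Proof.
intros Hab Hd Hf Hdf.
set (g := fun x => df (clamp a b x)).
assert (Cg : forall x, continuous g x) by (apply continuous_clamp; auto; lra).
assert (Ig : forall u v, ex_RInt g u v).
{ intros u v. apply (ex_RInt_continuous (V := R_CompleteNormedModule)). auto. }
set (P := fun x => RInt g a x).
assert (DP : forall x, is_derive P x (g x)).
{ intros x. apply is_derive_RInt with (a := a); [|apply Cg].
  exists (mkposreal 1 Rlt_0_1). intros. apply RInt_correct, Ig. }
(* [P - f o clamp] has zero derivative inside [a, b], so it is constant on [a, b]. *)
destruct (MVT_gen (fun x => P x - f (clamp a b x)) a b (fun _ => 0)) as [x0 [_ Hx0]].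
- rewrite Rmin_left, Rmax_right by lra. intros x Hx.
  replace 0 with (g x - df x) by (unfold g; rewrite clamp_id by lra; ring).
  apply (is_derive_minus P (fun x => f (clamp a b x))); [apply DP|].
  apply is_derive_ext_loc with (f := f); [|now apply Hd].
  apply (locally_interval _ x a b); simpl; try lra.
  intros y Hay Hyb. rewrite clamp_id by (simpl in *; lra). reflexivity.
- intros x _. apply continuity_pt_filterlim.
  apply (continuous_minus P (fun x => f (clamp a b x))).
  + apply ex_derive_continuous. eexists. apply DP.
  + apply continuous_clamp; auto; lra.
- unfold P in Hx0. rewrite RInt_point, !clamp_id in Hx0 by lra.
  change zero with 0 in Hx0.
  apply is_RInt_ext with g.
  + rewrite Rmin_left, Rmax_right by lra. intros x Hx.
    unfold g. rewrite clamp_id by lra. reflexivity.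
  + replace (f b - f a) with (RInt g a b) by lra.
    apply (RInt_correct (V := R_CompleteNormedModule)), Ig.
Qed.

Lemma RInt_slice_continuous_within (g : R -> R -> R) a b c d : c < d ->
  (forall x y, a <= x <= b -> c <= y <= d -> continuity_2d_pt g x y) ->
  forall x0, a <= x0 <= b -> continuous_within a b (fun x => RInt (fun t => g x t) c d) x0.
Proof.
intros Hcd Hg x0 Hx0 eps.
assert (Heps : 0 < eps / (2 * (d - c))).
{ apply Rdiv_lt_0_compat; [apply cond_pos | lra]. }
destruct (uniform_continuity_2d g a b c d Hg (mkposreal _ Heps)) as [del Hdel].
exists del. intros x Hx Hxx.
assert (Ix : ex_RInt (fun t => g x t) c d) by (apply ex_RInt_slice; auto; lra).
assert (Ix0 : ex_RInt (fun t => g x0 t) c d) by (apply ex_RInt_slice; auto; lra).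
rewrite <- (RInt_minus (fun t => g x t) (fun t => g x0 t)) by assumption.
eapply Rle_lt_trans.
- apply abs_RInt_le_const with (M := eps / (2 * (d - c))); [lra| |].
  + apply (ex_RInt_minus (fun t => g x t) (fun t => g x0 t)); assumption.
  + intros t Ht. left. apply (Hdel x0 t x t); auto.
    rewrite Rminus_eq_0, Rabs_R0. apply cond_pos.
- pose proof (cond_pos eps). field_simplify; lra.
Qed.

Definition is_dr_on (a b c d : R) (F F1 : R -> R -> R) : Prop :=
  forall r z, a <= r <= b -> c <= z <= d ->
    is_derive (fun x => F x z) r (F1 r z) /\
    continuity_2d_pt F r z /\ continuity_2d_pt F1 r z.

Definition is_dz_on (a b c d : R) (F F2 : R -> R -> R) : Prop :=
  forall r z, a <= r <= b -> c <= z <= d ->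
    is_derive (fun y => F r y) z (F2 r z) /\
    continuity_2d_pt F r z /\ continuity_2d_pt F2 r z.

Lemma continuity_2d_pt_clamp_snd (g : R -> R -> R) c d x t : c <= t <= d ->
  continuity_2d_pt g x t -> continuity_2d_pt (fun u v => g u (clamp c d v)) x t.
Proof.
intros Ht Hg eps. destruct (Hg eps) as [del Hdel]. exists del. intros u v Hu Hv.
rewrite (clamp_id c d t) by exact Ht. apply Hdel; [exact Hu|].
rewrite <- (clamp_id c d t Ht).
eapply Rle_lt_trans; [apply clamp_dist; lra | exact Hv].
Qed.

Lemma is_derive_RInt_slice (F F1 : R -> R -> R) a b c d :
  c < d -> is_dr_on a b c d F F1 ->
  forall x, a < x < b ->
  is_derive (fun x => RInt (fun z => F x z) c d) x (RInt (fun z => F1 x z) c d).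
Proof.
intros Hcd HF x Hx.
(* [is_derive_RInt_param] needs [dr F] continuous on a whole neighbourhood of
   [(x, z)], also for [z = c] and [z = d]; clamping [z] provides this. *)
set (Fc := fun u t => F u (clamp c d t)).
assert (Loc : forall P : R -> Prop, (forall y, a < y < b -> P y) -> locally x P).
{ intros P HP. apply (locally_interval P x a b); simpl; try lra.
  intros y Hay Hyb. apply HP. simpl in *. lra. }
assert (DFc : forall y t, a < y < b ->
          is_derive (fun u => Fc u t) y (F1 y (clamp c d t))).
{ intros y t Hy. apply HF; [lra | apply clamp_in; lra]. }
assert (D := is_derive_RInt_param Fc c d x).
rewrite Rmin_left, Rmax_right in D by lra.
assert (EF : forall y, RInt (fun t => Fc y t) c d = RInt (fun z => F y z) c d).
{ intros y. apply RInt_ext. rewrite Rmin_left, Rmax_right by lra.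
  intros t Ht. unfold Fc. rewrite clamp_id by lra. reflexivity. }
assert (EF1 : RInt (fun t => Derive (fun u => Fc u t) x) c d = RInt (fun z => F1 x z) c d).
{ apply RInt_ext. rewrite Rmin_left, Rmax_right by lra. intros t Ht.
  transitivity (F1 x (clamp c d t)); [now apply is_derive_unique, DFc|].
  now rewrite clamp_id by lra. }
rewrite <- EF1. apply (is_derive_ext (fun y => RInt (fun t => Fc y t) c d)); [exact EF|].
apply D.
- apply Loc. intros y Hy t _. eexists. now apply DFc.
- intros t Ht.
  apply continuity_2d_pt_ext_loc with (f := fun u v => F1 u (clamp c d v)).
  + assert (Hdel : 0 < Rmin (x - a) (b - x)) by (apply Rmin_glb_lt; lra).
    exists (mkposreal _ Hdel). intros u v Hu _. simpl in Hu.
    assert (a < u < b).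
    { pose proof (Rmin_l (x - a) (b - x)). pose proof (Rmin_r (x - a) (b - x)).
      unfold Rabs in Hu. destruct Rcase_abs in Hu; lra. }
    symmetry. apply is_derive_unique. now apply DFc.
  + apply continuity_2d_pt_clamp_snd; [exact Ht|]. apply HF; lra.
- apply Loc. intros y Hy. eapply ex_RInt_ext; [|apply (ex_RInt_slice F c d y)].
  + rewrite Rmin_left, Rmax_right by lra. intros z Hz.
    unfold Fc. rewrite clamp_id by lra. reflexivity.
  + lra.
  + intros z Hz. apply HF; lra.
Qed.

Lemma is_RInt_RInt_dr (F F1 : R -> R -> R) a b c d :
  a < b -> c < d -> is_dr_on a b c d F F1 ->
  is_RInt (fun r => RInt (fun z => F1 r z) c d) a b
    (RInt (fun z => F b z) c d - RInt (fun z => F a z) c d).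
Proof.
intros Hab Hcd HF.
apply (is_RInt_derive_interior (fun r => RInt (fun z => F r z) c d)); [exact Hab | | |].
- now apply is_derive_RInt_slice.
- apply RInt_slice_continuous_within; [exact Hcd|]. intros. now apply HF.
- apply RInt_slice_continuous_within; [exact Hcd|]. intros. now apply HF.
Qed.

Lemma is_RInt_dz (F F2 : R -> R -> R) a b c d r :
  c <= d -> is_dz_on a b c d F F2 -> a <= r <= b ->
  is_RInt (fun z => F2 r z) c d (F r d - F r c).
Proof.
intros Hcd HF Hr.
apply (is_RInt_derive (fun z => F r z)); rewrite Rmin_left, Rmax_right by lra.
- intros z Hz. now apply HF.
- intros z Hz. apply continuity_2d_pt_snd. now apply HF.
Qed.

Lemma RInt_zero_on (f : R -> R) a b :
  a <= b -> (forall x, a <= x <= b -> f x = 0) -> RInt f a b = 0.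
Proof.
intros Hab Hf. rewrite (RInt_ext f (fun _ => 0)).
- rewrite RInt_const. apply Rmult_0_r.
- rewrite Rmin_left, Rmax_right by lra. intros x Hx. apply Hf. lra.
Qed.

Lemma divergence_rectangle (F F1 G G2 : R -> R -> R) a b c d :
  a < b -> c < d -> is_dr_on a b c d F F1 -> is_dz_on a b c d G G2 ->
  (forall z, c <= z <= d -> F a z = 0 /\ F b z = 0) ->
  is_RInt (fun r => RInt (fun z => F1 r z + G2 r z) c d) a b
    (RInt (fun r => G r d - G r c) a b).
Proof.
intros Hab Hcd HF HG HF0.
assert (Hsplit : forall r, a <= r <= b ->
  RInt (fun z => F1 r z + G2 r z) c d = RInt (fun z => F1 r z) c d + (G r d - G r c)).
{ intros r Hr.
  rewrite (RInt_plus (fun z => F1 r z) (fun z => G2 r z)).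
  - apply Rplus_eq_compat_l, is_RInt_unique. eapply is_RInt_dz; eauto; lra.
  - apply ex_RInt_slice; [lra|]. intros. now apply HF.
  - eexists. eapply is_RInt_dz; eauto; lra. }
apply (is_RInt_ext (fun r => RInt (fun z => F1 r z) c d + (G r d - G r c))).
{ rewrite Rmin_left, Rmax_right by lra. intros r Hr. symmetry. apply Hsplit. lra. }
replace (RInt (fun r => G r d - G r c) a b) with
  ((RInt (fun z => F b z) c d - RInt (fun z => F a z) c d)
   + RInt (fun r => G r d - G r c) a b).
2: { rewrite !(RInt_zero_on (fun z => F _ z)) by (lra || intros; now apply HF0). ring. }
apply (is_RInt_plus (V := R_NormedModule)).
- now apply is_RInt_RInt_dr.
- apply (RInt_correct (V := R_CompleteNormedModule)).
  apply ex_RInt_continuous_on; [lra|]. intros r Hr.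
  apply (continuous_minus (fun r => G r d) (fun r => G r c));
    apply continuity_2d_pt_fst, HG; lra.
Qed.

Lemma RInt_if_lt (f g : R -> R) a b c : a <= b <= c ->
  ex_RInt f a b -> ex_RInt g b c ->
  RInt (fun z => if Rlt_dec z b then f z else g z) a c = RInt f a b + RInt g b c.
Proof.
intros Habc If Ig.
assert (Ef : forall z, a < z < b -> f z = (if Rlt_dec z b then f z else g z)).
{ intros z Hz. destruct Rlt_dec; [reflexivity | lra]. }
assert (Eg : forall z, b < z < c -> g z = (if Rlt_dec z b then f z else g z)).
{ intros z Hz. destruct Rlt_dec; [lra | reflexivity]. }
rewrite <- (RInt_Chasles _ a b c).
- apply (f_equal2 Rplus); apply RInt_ext; rewrite Rmin_left, Rmax_right by lra;
    intros z Hz; symmetry.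
  + now apply Ef.
  + now apply Eg.
- eapply ex_RInt_ext; [|exact If]. rewrite Rmin_left, Rmax_right by lra. exact Ef.
- eapply ex_RInt_ext; [|exact Ig]. rewrite Rmin_left, Rmax_right by lra. exact Eg.
Qed.

Ltac continuity_2d :=
  repeat match goal with
  | |- continuity_2d_pt (fun u v => _ + _) _ _ => apply continuity_2d_pt_plus
  | |- continuity_2d_pt (fun u v => _ - _) _ _ => apply continuity_2d_pt_minus
  | |- continuity_2d_pt (fun u v => _ * _) _ _ => apply continuity_2d_pt_mult
  | |- continuity_2d_pt (fun u v => - _) _ _ => apply continuity_2d_pt_opp
  | |- continuity_2d_pt (fun u v => u) _ _ => apply continuity_2d_pt_id1
  | |- continuity_2d_pt (fun u v => ?c) _ _ => apply continuity_2d_pt_const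
  | |- continuity_2d_pt _ _ _ => assumption
  end.

Lemma C1_on_pt a b c d f r z : C1_on a b c d f -> a <= r <= b -> c <= z <= d ->
  is_derive (fun x => f x z) r (dr f r z) /\ is_derive (fun y => f r y) z (dz f r z) /\
  continuity_2d_pt f r z /\ continuity_2d_pt (dr f) r z /\ continuity_2d_pt (dz f) r z.
Proof.
intros Hf Hr Hz. destruct (Hf r z Hr Hz) as (Cf & Dr & Dz & Cdr & Cdz).
repeat split; try apply Derive_correct; assumption.
Qed.

Lemma C1_on_is_dr_scal a b c d k f : C1_on a b c d f ->
  is_dr_on a b c d (fun x z => k * f x z) (fun x z => k * dr f x z).
Proof.
intros Hf r z Hr Hz. destruct (C1_on_pt a b c d f r z Hf Hr Hz) as (Dr & _ & Cf & Cdr & _).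
split; [apply (is_derive_scal (fun x => f x z)), Dr | split; continuity_2d].
Qed.

Lemma C1_on_is_dz_scal a b c d k f : C1_on a b c d f ->
  is_dz_on a b c d (fun x z => k * f x z) (fun x z => k * dz f x z).
Proof.
intros Hf r z Hr Hz. destruct (C1_on_pt a b c d f r z Hf Hr Hz) as (_ & Dz & Cf & _ & Cdz).
split; [apply (is_derive_scal (fun y => f r y)), Dz | split; continuity_2d].
Qed.

(** * Norton's law at the homogeneous solution *)

Definition vonMises_sq (v : vec4) : R :=
  3 / 2 * ((v 0%nat - dev_mean v) ^ 2 + (v 1%nat - dev_mean v) ^ 2
           + (v 2%nat - dev_mean v) ^ 2 + 2 * (v 3%nat) ^ 2).

(* [edot n v i = eng_dev v i * Rpower (vonMises v) (n - 1)] for [i < 4]. *)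
Definition eng_dev (v : vec4) (i : nat) : R :=
  match i with
  | 0%nat | 1%nat | 2%nat => v i - dev_mean v
  | _ => 2 * v 3%nat
  end.

Definition eng_dev_jacobian (i j : nat) : R :=
  match i, j with
  | 3%nat, 3%nat => 2
  | 3%nat, _ | _, 3%nat => 0
  | _, _ => (if Nat.eqb i j then 1 else 0) - 1 / 3
  end.

Lemma Derive_edot n (v : vec4) i j : (i < 4)%nat -> (j < 4)%nat -> 0 < vonMises_sq v ->
  Derive (fun t => edot n (upd v j t) i) (v j) =
  eng_dev_jacobian i j * Rpower (vonMises v) (n - 1)
  + (n - 1) * Rpower (vonMises v) (n - 1) / vonMises_sq v * (3 / 2)
    * eng_dev v i * eng_dev v j.
Proof.
intros Hi Hj HQ.
assert (HS : 0 < sqrt (vonMises_sq v)) by (apply sqrt_lt_R0; auto).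
assert (HS2 : sqrt (vonMises_sq v) * sqrt (vonMises_sq v) = vonMises_sq v)
  by (apply sqrt_sqrt; lra).
unfold vonMises_sq, dev_mean in *. apply is_derive_unique.
destruct i as [|[|[|[|i]]]]; try lia; destruct j as [|[|[|[|j]]]]; try lia;
unfold edot, upd, vonMises, eng_dev, eng_dev_jacobian, Rpower, dev_mean in *; simpl in *;
auto_derive; unfold Rminus, Rdiv in *;
first [ (repeat split; auto; fail)
| (set (S := sqrt _) in *; set (E := exp _) in *; try rewrite <- HS2; field; lra) ].
Qed.

Lemma Derive_edot_sym n (v : vec4) i j : (i < 4)%nat -> (j < 4)%nat -> 0 < vonMises_sq v ->
  Derive (fun t => edot n (upd v j t) i) (v j) = Derive (fun t => edot n (upd v i t) j) (v i).
Proof.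
intros Hi Hj HQ. rewrite !Derive_edot by assumption.
replace (eng_dev_jacobian j i) with (eng_dev_jacobian i j); [ring|].
destruct i as [|[|[|[|i]]]]; try lia; destruct j as [|[|[|[|j]]]]; try lia; reflexivity.
Qed.

Definition sigma0_dev (ri ro n p r : R) : R := a_r ri ro n p * Rpower r (- 2 / n) / n.

Section Homogeneous.
Variables ri ro n p : R.
Hypotheses (Hri : 0 < ri) (Hro : ri < ro) (Hn : 0 < n) (Hp : 0 < p).

Lemma a_r_neg : a_r ri ro n p < 0.
Proof.
assert (Hlt : Rpower ri (2 / n) < Rpower ro (2 / n)).
{ apply Rlt_Rpower_l; [apply Rdiv_lt_0_compat|]; lra. }
assert (0 < Rpower ri (2 / n)) by apply exp_pos.
unfold a_r, Rdiv. rewrite !Ropp_mult_distr_l_reverse.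
apply Ropp_lt_gt_0_contravar. repeat apply Rmult_lt_0_compat; try apply exp_pos; auto.
apply Rinv_0_lt_compat. lra.
Qed.

Lemma sigma0_dev_neg r : sigma0_dev ri ro n p r < 0.
Proof.
unfold sigma0_dev, Rdiv. pose proof a_r_neg.
assert (0 < - a_r ri ro n p * Rpower r (-2 / n) * / n).
{ repeat apply Rmult_lt_0_compat; [lra | apply exp_pos | apply Rinv_0_lt_compat; lra]. }
lra.
Qed.

Lemma sigma0_dev_r r :
  sigma0 ri ro n p r 0%nat - dev_mean (sigma0 ri ro n p r) = sigma0_dev ri ro n p r.
Proof. unfold dev_mean, sigma0, a_theta, a_z, sigma0_dev. field. lra. Qed.

Lemma sigma0_dev_theta r :
  sigma0 ri ro n p r 1%nat - dev_mean (sigma0 ri ro n p r) = - sigma0_dev ri ro n p r.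
Proof. unfold dev_mean, sigma0, a_theta, a_z, sigma0_dev. field. lra. Qed.

Lemma sigma0_dev_z r : sigma0 ri ro n p r 2%nat - dev_mean (sigma0 ri ro n p r) = 0.
Proof. unfold dev_mean, sigma0, a_theta, a_z. field. lra. Qed.

Lemma vonMises_sq_sigma0 r :
  vonMises_sq (sigma0 ri ro n p r) = 3 * sigma0_dev ri ro n p r ^ 2.
Proof.
unfold vonMises_sq. rewrite sigma0_dev_r, sigma0_dev_theta, sigma0_dev_z. simpl. field.
Qed.

Lemma vonMises_sq_sigma0_pos r : 0 < vonMises_sq (sigma0 ri ro n p r).
Proof. rewrite vonMises_sq_sigma0. pose proof (sigma0_dev_neg r). nra. Qed.

Lemma ln_vonMises_sigma0 r : 0 < r ->
  ln (vonMises (sigma0 ri ro n p r)) =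
  ln 3 / 2 + ln (- a_r ri ro n p) + - 2 / n * ln r - ln n.
Proof.
intros Hr. pose proof (sigma0_dev_neg r). pose proof a_r_neg.
unfold vonMises. fold (vonMises_sq (sigma0 ri ro n p r)).
rewrite vonMises_sq_sigma0, sqrt_mult, <- Rsqr_pow2, sqrt_Rsqr_abs, Rabs_left by nra.
rewrite <- (Rpower_sqrt 3) by lra. unfold sigma0_dev, Rdiv.
rewrite !Ropp_mult_distr_l, !ln_mult, ln_Rinv, !ln_Rpower.
- field. lra.
all: repeat first [apply Rmult_lt_0_compat | apply Rinv_0_lt_compat | apply exp_pos | lra].
Qed.

Lemma edot_sigma0_r r : 0 < r ->
  edot n (sigma0 ri ro n p r) 0%nat = c_const ri ro n p / r ^ 2.
Proof.
intros Hr. pose proof a_r_neg. set (A := a_r ri ro n p) in *.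
unfold edot. rewrite sigma0_dev_r. unfold Rpower at 1.
rewrite ln_vonMises_sigma0 by lra.
unfold sigma0_dev, c_const, Rpower. fold A. rewrite Rabs_left by lra.
transitivity (A * exp (-2 / n * ln r + - ln n
                       + (n - 1) * (ln 3 / 2 + ln (- A) + -2 / n * ln r - ln n))).
{ rewrite !exp_plus, exp_Ropp, exp_ln by lra. unfold Rdiv. ring. }
transitivity (A * exp ((n - 1) / 2 * ln 3 + (n - 1) * ln (- A) + - n * ln n
                       + - (INR 2 * ln r))).
{ f_equal. f_equal. simpl. field. lra. }
rewrite !exp_plus, exp_Ropp, <- ln_pow, exp_ln by (try apply pow_lt; lra).
unfold Rdiv. ring.
Qed.

Lemma sum4_edot_sigma0 r (w : vec4) : 0 < r ->
  sum4 (fun i => edot n (sigma0 ri ro n p r) i * w i) =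
  c_const ri ro n p / r ^ 2 * (w 0%nat - w 1%nat).
Proof.
intros Hr. rewrite <- edot_sigma0_r by exact Hr. unfold sum4, edot.
rewrite sigma0_dev_r, sigma0_dev_theta, sigma0_dev_z.
change (sigma0 ri ro n p r 3%nat) with 0. ring.
Qed.

Lemma edot_sigma0_work_equilibrium r (ds : stress) z : 0 < r ->
  dr (ds 0%nat) r z + / r * (ds 0%nat r z - ds 1%nat r z) + dz (ds 3%nat) r z = 0 ->
  sum4 (fun i => edot n (sigma0 ri ro n p r) i * ds i r z) * r =
  - c_const ri ro n p * dr (ds 0%nat) r z + - c_const ri ro n p * dz (ds 3%nat) r z.
Proof.
intros Hr Er. rewrite (sum4_edot_sigma0 r (fun i => ds i r z)) by exact Hr.
transitivity (- c_const ri ro n p * dr (ds 0%nat) r z + - c_const ri ro n p * dz (ds 3%nat) r z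
  + c_const ri ro n p * (dr (ds 0%nat) r z + / r * (ds 0%nat r z - ds 1%nat r z)
                          + dz (ds 3%nat) r z)).
- field. lra.
- rewrite Er. ring.
Qed.

Lemma compliance_sym r i j : (i < 4)%nat -> (j < 4)%nat ->
  compliance ri ro n p r i j = compliance ri ro n p r j i.
Proof. intros Hi Hj. apply Derive_edot_sym; auto. apply vonMises_sq_sigma0_pos. Qed.

Lemma sum4_Cmul_sym r (a b : vec4) :
  sum4 (fun i => a i * Cmul ri ro n p r b i) = sum4 (fun i => Cmul ri ro n p r a i * b i).
Proof.
unfold Cmul, sum4.
rewrite (compliance_sym r 1 0), (compliance_sym r 2 0), (compliance_sym r 3 0),
  (compliance_sym r 2 1), (compliance_sym r 3 1), (compliance_sym r 3 2) by lia.
ring.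
Qed.

End Homogeneous.

(** * Virtual work *)

Definition lateral_traction_free (ri ro c d : R) (s : stress) : Prop :=
  forall z, c <= z <= d ->
    s 0%nat ri z = 0 /\ s 3%nat ri z = 0 /\ s 0%nat ro z = 0 /\ s 3%nat ro z = 0.

Definition virtual_stress_on (ri ro c d : R) (ds : stress) : Prop :=
  stress_C1_on ri ro c d ds /\ equilibrium_on ri ro c d ds /\
  lateral_traction_free ri ro c d ds.

Lemma admissible_virtual_stress_on ri ro H c d ds :
  0 <= c -> d <= H -> admissible ri ro H ds -> virtual_stress_on ri ro c d ds.
Proof.
intros Hc Hd (Cds & Eds & Tds & _). split; [|split].
- intros i Hi r z Hr Hz. apply Cds; [exact Hi | exact Hr | lra].
- intros r z Hr Hz. apply Eds; [exact Hr | lra].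
- intros z Hz. apply Tds. lra.
Qed.

(* [r] times the work of the traction [(ds_rz, ds_z)] on a plane [z = const]
   through the displacement [(u_r, u_z)]. *)
Definition axial_traction_work (u : displ) (ds : stress) (r z : R) : R :=
  r * (u 0%nat r z * ds 3%nat r z + u 1%nat r z * ds 2%nat r z).

Lemma ex_RInt_axial_traction_work_diff ri ro c d u ds z1 z2 : ri <= ro ->
  displ_C1_on ri ro c d u -> stress_C1_on ri ro c d ds -> c <= z1 <= d -> c <= z2 <= d ->
  ex_RInt (fun r => axial_traction_work u ds r z1 - axial_traction_work u ds r z2) ri ro.
Proof.
intros Hro [Hu0 Hu1] Hds Hz1 Hz2. apply ex_RInt_continuous_on; [exact Hro|]. intros r Hr.
assert (Cw : forall z, c <= z <= d -> continuity_2d_pt (axial_traction_work u ds) r z).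
{ intros z Hz.
  destruct (C1_on_pt _ _ _ _ _ r z Hu0 Hr Hz) as (_ & _ & C0 & _).
  destruct (C1_on_pt _ _ _ _ _ r z Hu1 Hr Hz) as (_ & _ & C1 & _).
  destruct (C1_on_pt _ _ _ _ _ r z (Hds 2%nat ltac:(lia)) Hr Hz) as (_ & _ & C2 & _).
  destruct (C1_on_pt _ _ _ _ _ r z (Hds 3%nat ltac:(lia)) Hr Hz) as (_ & _ & C3 & _).
  unfold axial_traction_work. continuity_2d. }
apply (continuous_minus (fun r => axial_traction_work u ds r z1)
                        (fun r => axial_traction_work u ds r z2));
  apply continuity_2d_pt_fst, Cw; assumption.
Qed.

Ltac ex_derive_hyps := repeat match goal with
  | |- _ /\ _ => split
  | |- True => exact I
  | H : is_derive ?f ?x _ |- ex_derive ?f ?x => eexists; exact H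
  end.

Section VirtualWork.
Variables (ri ro c d : R) (u : displ) (ds : stress).
Hypotheses (Hri : 0 < ri) (Hro : ri < ro) (Hcd : c < d)
  (Hu : displ_C1_on ri ro c d u) (Hds : virtual_stress_on ri ro c d ds).

Let radial_work x z := x * (u 0%nat x z * ds 0%nat x z + u 1%nat x z * ds 3%nat x z).
Let dr_radial_work x z := (u 0%nat x z * ds 0%nat x z + u 1%nat x z * ds 3%nat x z)
  + x * (dr (u 0%nat) x z * ds 0%nat x z + u 0%nat x z * dr (ds 0%nat) x z
         + dr (u 1%nat) x z * ds 3%nat x z + u 1%nat x z * dr (ds 3%nat) x z).
Let dz_axial_work x z :=
  x * (dz (u 0%nat) x z * ds 3%nat x z + u 0%nat x z * dz (ds 3%nat) x z
       + dz (u 1%nat) x z * ds 2%nat x z + u 1%nat x z * dz (ds 2%nat) x z).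

Lemma radial_work_is_dr : is_dr_on ri ro c d radial_work dr_radial_work.
Proof.
destruct Hu as [Hu0 Hu1]. destruct Hds as (Cds & _).
intros r z Hr Hz.
destruct (C1_on_pt _ _ _ _ _ r z Hu0 Hr Hz) as (a1 & _ & a3 & a4 & _).
destruct (C1_on_pt _ _ _ _ _ r z Hu1 Hr Hz) as (b1 & _ & b3 & b4 & _).
destruct (C1_on_pt _ _ _ _ _ r z (Cds 0%nat ltac:(lia)) Hr Hz) as (c1 & _ & c3 & c4 & _).
destruct (C1_on_pt _ _ _ _ _ r z (Cds 3%nat ltac:(lia)) Hr Hz) as (e1 & _ & e3 & e4 & _).
unfold radial_work, dr_radial_work. split; [|split; continuity_2d].
auto_derive; [ex_derive_hyps | unfold dr; ring].
Qed.

Lemma axial_work_is_dz : is_dz_on ri ro c d (axial_traction_work u ds) dz_axial_work.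
Proof.
destruct Hu as [Hu0 Hu1]. destruct Hds as (Cds & _).
intros r z Hr Hz.
destruct (C1_on_pt _ _ _ _ _ r z Hu0 Hr Hz) as (_ & a2 & a3 & _ & a5).
destruct (C1_on_pt _ _ _ _ _ r z Hu1 Hr Hz) as (_ & b2 & b3 & _ & b5).
destruct (C1_on_pt _ _ _ _ _ r z (Cds 2%nat ltac:(lia)) Hr Hz) as (_ & c2 & c3 & _ & c5).
destruct (C1_on_pt _ _ _ _ _ r z (Cds 3%nat ltac:(lia)) Hr Hz) as (_ & e2 & e3 & _ & e5).
unfold axial_traction_work, dz_axial_work. split; [|split; continuity_2d].
auto_derive; [ex_derive_hyps | unfold dz; ring].
Qed.

(* Integration by parts: the two sides differ by [r] times [u_r] and [u_z] times the
   equilibrium residuals of [ds]. *)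
Lemma strain_work_divergence r z : ri <= r <= ro -> c <= z <= d ->
  sum4 (fun i => strain_of u r z i * ds i r z) * r = dr_radial_work r z + dz_axial_work r z.
Proof.
intros Hr Hz. destruct Hds as (_ & Eds & _). destruct (Eds r z Hr Hz) as [Er Ez].
transitivity (dr_radial_work r z + dz_axial_work r z
  - r * (u 0%nat r z * (dr (ds 0%nat) r z + / r * (ds 0%nat r z - ds 1%nat r z)
                        + dz (ds 3%nat) r z)
         + u 1%nat r z * (dr (ds 3%nat) r z + / r * ds 3%nat r z + dz (ds 2%nat) r z))).
- unfold sum4, strain_of, dr_radial_work, dz_axial_work. field. lra.
- rewrite Er, Ez. ring.
Qed.

Lemma virtual_work_rectangle :
  (forall r, ri <= r <= ro ->
     ex_RInt (fun z => sum4 (fun i => strain_of u r z i * ds i r z) * r) c d) /\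
  is_RInt (fun r => RInt (fun z => sum4 (fun i => strain_of u r z i * ds i r z) * r) c d) ri ro
    (RInt (fun r => axial_traction_work u ds r d - axial_traction_work u ds r c) ri ro).
Proof.
split.
- intros r Hr.
  apply (ex_RInt_ext (fun z => dr_radial_work r z + dz_axial_work r z)).
  { rewrite Rmin_left, Rmax_right by lra. intros z Hz. symmetry.
    apply strain_work_divergence; [exact Hr | lra]. }
  apply (ex_RInt_slice (fun x z => dr_radial_work x z + dz_axial_work x z)); [lra|].
  intros z Hz. apply continuity_2d_pt_plus;
    [apply radial_work_is_dr | apply axial_work_is_dz]; auto.
- apply (is_RInt_ext (fun r => RInt (fun z => dr_radial_work r z + dz_axial_work r z) c d)).
  { rewrite Rmin_left, Rmax_right by lra. intros r Hr. apply RInt_ext.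
    rewrite Rmin_left, Rmax_right by lra. intros z Hz. symmetry.
    apply strain_work_divergence; lra. }
  apply (divergence_rectangle radial_work); auto using radial_work_is_dr, axial_work_is_dz.
  intros z Hz. destruct Hds as (_ & _ & Tds). destruct (Tds z Hz) as (T0 & T3 & T0' & T3').
  unfold radial_work. rewrite T0, T3, T0', T3'. split; ring.
Qed.

End VirtualWork.

Definition compliance_work (ri ro n p : R) (s ds : stress) (r z : R) : R :=
  sum4 (fun i => eval_stress s r z i * Cmul ri ro n p r (eval_stress ds r z) i) * r.

Lemma compliance_virtual_work ri ro c d n p (s ds : stress) (u : displ) :
  0 < ri -> ri < ro -> c < d -> 0 < n -> 0 < p ->
  displ_C1_on ri ro c d u -> virtual_stress_on ri ro c d ds ->
  (forall r z, ri <= r <= ro -> c <= z <= d -> forall i, (i < 4)%nat ->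
     strain_of u r z i = Cmul ri ro n p r (eval_stress s r z) i) ->
  (forall r, ri <= r <= ro -> ex_RInt (fun z => compliance_work ri ro n p s ds r z) c d) /\
  is_RInt (fun r => RInt (fun z => compliance_work ri ro n p s ds r z) c d) ri ro
    (RInt (fun r => axial_traction_work u ds r d - axial_traction_work u ds r c) ri ro).
Proof.
intros Hri Hro Hcd Hn Hp Hu Hds Hs.
assert (E : forall r z, ri <= r <= ro -> c <= z <= d ->
  sum4 (fun i => strain_of u r z i * ds i r z) * r = compliance_work ri ro n p s ds r z).
{ intros r z Hr Hz. unfold compliance_work.
  rewrite sum4_Cmul_sym by assumption. unfold sum4.
  rewrite !(Hs r z Hr Hz) by lia. reflexivity. }
destruct (virtual_work_rectangle ri ro c d u ds) as [Ex I]; auto.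
split.
- intros r Hr. eapply ex_RInt_ext; [|exact (Ex r Hr)].
  rewrite Rmin_left, Rmax_right by lra. intros z Hz. apply E; lra.
- eapply is_RInt_ext; [|exact I]. rewrite Rmin_left, Rmax_right by lra.
  intros r Hr. apply RInt_ext. rewrite Rmin_left, Rmax_right by lra.
  intros z Hz. apply E; lra.
Qed.

Lemma edot_sigma0_virtual_work ri ro c d n p (ds : stress) :
  0 < ri -> ri < ro -> c < d -> 0 < n -> 0 < p -> virtual_stress_on ri ro c d ds ->
  RInt (fun r => RInt (fun z =>
      sum4 (fun i => edot n (sigma0 ri ro n p r) i * ds i r z) * r) c d) ri ro
  = RInt (fun r => - c_const ri ro n p * (ds 3%nat r d - ds 3%nat r c)) ri ro.
Proof.
intros Hri Hro Hcd Hn Hp (Cds & Eds & Tds).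
set (k := - c_const ri ro n p).
assert (Div := divergence_rectangle
  (fun x z => k * ds 0%nat x z) (fun x z => k * dr (ds 0%nat) x z)
  (fun x z => k * ds 3%nat x z) (fun x z => k * dz (ds 3%nat) x z) ri ro c d Hro Hcd).
transitivity (RInt (fun r => k * ds 3%nat r d - k * ds 3%nat r c) ri ro).
2: { apply RInt_ext. intros r _. symmetry. apply Rmult_minus_distr_l. }
apply is_RInt_unique. eapply is_RInt_ext; [|apply Div].
- rewrite Rmin_left, Rmax_right by lra. intros r Hr. apply RInt_ext.
  rewrite Rmin_left, Rmax_right by lra. intros z Hz.
  symmetry. apply edot_sigma0_work_equilibrium; try lra. apply Eds; lra.
- apply C1_on_is_dr_scal, Cds. lia.
- apply C1_on_is_dz_scal, Cds. lia.
- intros z Hz. destruct (Tds z Hz) as (T0 & _ & T0' & _). rewrite T0, T0'. split; ring.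
Qed.

Lemma RInt_compliance_work_glue ri ro n p h H (sm sp ds : stress) r : 0 <= h <= H ->
  ex_RInt (fun z => compliance_work ri ro n p sm ds r z) 0 h ->
  ex_RInt (fun z => compliance_work ri ro n p sp ds r z) h H ->
  RInt (fun z => compliance_work ri ro n p (glue h sm sp) ds r z) 0 H =
  RInt (fun z => compliance_work ri ro n p sm ds r z) 0 h
  + RInt (fun z => compliance_work ri ro n p sp ds r z) h H.
Proof.
intros Hh Im Ip. rewrite <- RInt_if_lt by (assumption || lra).
apply RInt_ext. intros z _. unfold compliance_work, eval_stress, glue.
destruct Rlt_dec; reflexivity.
Qed.

Lemma interface_traction_work ri ro h H k (um up : displ) (ds : stress) :
  0 < ri -> ri < ro -> 0 < h < H ->
  displ_C1_on ri ro 0 h um -> displ_C1_on ri ro h H up -> stress_C1_on ri ro 0 H ds ->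
  (forall r, ri <= r <= ro -> um 1%nat r 0 = 0) ->
  (forall r, ri <= r <= ro -> up 1%nat r H = 0) ->
  (forall r, ri <= r <= ro -> ds 3%nat r 0 = 0 /\ ds 3%nat r H = 0) ->
  (forall r, ri <= r <= ro ->
     up 1%nat r h = um 1%nat r h /\ up 0%nat r h - um 0%nat r h = k / r) ->
  RInt (fun r => axial_traction_work um ds r h - axial_traction_work um ds r 0) ri ro
  + RInt (fun r => axial_traction_work up ds r H - axial_traction_work up ds r h) ri ro
  = RInt (fun r => - k * (ds 3%nat r h - ds 3%nat r 0)) ri ro.
Proof.
intros Hri Hro Hh Cum Cup Cds Um0 UpH Ends Intf.
assert (Cdsm : stress_C1_on ri ro 0 h ds).
{ intros i Hi r z Hr Hz. apply Cds; [exact Hi | exact Hr | lra]. }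
assert (Cdsp : stress_C1_on ri ro h H ds).
{ intros i Hi r z Hr Hz. apply Cds; [exact Hi | exact Hr | lra]. }
apply eq_sym, is_RInt_unique.
apply (is_RInt_ext (fun r => (axial_traction_work um ds r h - axial_traction_work um ds r 0)
                   + (axial_traction_work up ds r H - axial_traction_work up ds r h))).
- rewrite Rmin_left, Rmax_right by lra. intros r Hr.
  destruct (Intf r ltac:(lra)) as [Iz Ir]. destruct (Ends r ltac:(lra)) as [E0 EH].
  unfold axial_traction_work. simpl. rewrite Um0, UpH, E0, EH, Iz by lra.
  replace (up 0%nat r h) with (um 0%nat r h + k / r) by lra. field. lra.
- apply (is_RInt_plus (V := R_NormedModule));
    apply (RInt_correct (V := R_CompleteNormedModule));
    eapply ex_RInt_axial_traction_work_diff; eauto; lra.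
Qed.

Theorem mainTheorem2 (ri ro h H n p : R) (sm sp : stress) (um up : displ) :
  0 < ri -> ri < ro -> 0 < h -> h < H -> 0 < n -> 0 < p ->
  (* regularity *)
  stress_C1_on ri ro 0 h sm -> stress_C1_on ri ro h H sp ->
  displ_C1_on ri ro 0 h um -> displ_C1_on ri ro h H up ->
  (* equilibrium *)
  equilibrium_on ri ro 0 h sm -> equilibrium_on ri ro h H sp ->
  (* traction-free inner/outer surfaces *)
  (forall z, 0 <= z <= h ->
     sm 0%nat ri z = 0 /\ sm 3%nat ri z = 0 /\ sm 0%nat ro z = 0 /\ sm 3%nat ro z = 0) ->
  (forall z, h <= z <= H ->
     sp 0%nat ri z = 0 /\ sp 3%nat ri z = 0 /\ sp 0%nat ro z = 0 /\ sp 3%nat ro z = 0) ->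
  (* end conditions *)
  (forall r, ri <= r <= ro -> sm 3%nat r 0 = 0) ->
  (forall r, ri <= r <= ro -> sp 3%nat r H = 0) ->
  (* compatibility: strain = C(r) sigma *)
  (forall r z, ri <= r <= ro -> 0 <= z <= h -> forall i, (i < 4)%nat ->
     strain_of um r z i = Cmul ri ro n p r (eval_stress sm r z) i) ->
  (forall r z, ri <= r <= ro -> h <= z <= H -> forall i, (i < 4)%nat ->
     strain_of up r z i = Cmul ri ro n p r (eval_stress sp r z) i) ->
  (forall r, ri <= r <= ro -> um 1%nat r 0 = 0) ->
  (forall r, ri <= r <= ro -> up 1%nat r H = 0) ->
  (* interface conditions at z = h *)
  (forall r, ri <= r <= ro ->
     sp 3%nat r h = sm 3%nat r h /\ sp 2%nat r h = sm 2%nat r h /\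
     up 1%nat r h = um 1%nat r h /\
     up 0%nat r h - um 0%nat r h = c_const ri ro n p / r) ->
  forall ds : stress, admissible ri ro H ds ->
    RInt (fun r => RInt (fun z =>
        sum4 (fun i => eval_stress (glue h sm sp) r z i
                       * Cmul ri ro n p r (eval_stress ds r z) i) * r) 0 H) ri ro
    = RInt (fun r => RInt (fun z =>
        sum4 (fun i => edot n (sigma0 ri ro n p r) i * ds i r z) * r) 0 h) ri ro.
Proof.
(* The hypotheses on [sm] and [sp] other than the constitutive relations make the
   glued field statically admissible; the identity itself does not need them. *)
intros Hri Hro Hh HhH Hn Hp _ _ Cum Cup _ _ _ _ _ _ Sm Sp Um0 UpH Intf ds Hds.
assert (Vm : virtual_stress_on ri ro 0 h ds)
  by (apply (admissible_virtual_stress_on ri ro H); auto; lra).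
assert (Vp : virtual_stress_on ri ro h H ds)
  by (apply (admissible_virtual_stress_on ri ro H); auto; lra).
destruct (compliance_virtual_work ri ro 0 h n p sm ds um) as [Exm Im]; auto.
destruct (compliance_virtual_work ri ro h H n p sp ds up) as [Exp Ip]; auto.
destruct Hds as (Cds & _ & _ & Ends).
rewrite (edot_sigma0_virtual_work ri ro 0 h n p ds) by auto.
rewrite <- (interface_traction_work ri ro h H (c_const ri ro n p) um up ds); auto.
2: { intros r Hr. exact (proj2 (proj2 (Intf r Hr))). }
apply is_RInt_unique.
apply (is_RInt_ext (fun r => RInt (fun z => compliance_work ri ro n p sm ds r z) 0 h
                           + RInt (fun z => compliance_work ri ro n p sp ds r z) h H)).
- rewrite Rmin_left, Rmax_right by lra. intros r Hr. symmetry.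
  apply RInt_compliance_work_glue; [lra | apply Exm | apply Exp]; lra.
- exact (is_RInt_plus (V := R_NormedModule) _ _ _ _ _ _ Im Ip).
Qed.
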